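(* Let $t$ be an $\mathrm{SL}_2$-tiling, and let $i<j$ and $p<q$ be integers. Then $t_{ip}t_{jq}-t_{iq}t_{jp}=c_{ij}d_{pq}$. In particular this determinant is a positive integer.
   Context: An $\mathrm{SL}_2$-tiling is a map $t:\mathbb{Z}\times\mathbb{Z}\to\{1,2,3,\dots\}$, $(i,j)\mapsto t_{ij}$, with $t_{ij}t_{i+1,j+1}-t_{i,j+1}t_{i+1,j}=1$ for all $i,j$. For integers $i<j$ and any integer $a$ put $c_{ij}=t_{ia}t_{j,a+1}-t_{i,a+1}t_{ja}$ and $d_{ij}=t_{ai}t_{a+1,j}-t_{aj}t_{a+1,i}$; these values do not depend on the choice of $a$ (a known fact about $\mathrm{SL}_2$-tilings). *)

From Stdlib Require Import ZArith.
Open Scope Z_scope.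

Definition is_SL2_tiling (t : Z -> Z -> Z) : Prop :=
  (forall i j, 1 <= t i j) /\
  (forall i j, t i j * t (i+1) (j+1) - t i (j+1) * t (i+1) j = 1).

(* c_{ij} computed using column a, d_{ij} computed using row a.
   (The paper notes these do not depend on a.) *)
Definition c_at (t : Z -> Z -> Z) (i j a : Z) : Z :=
  t i a * t j (a+1) - t i (a+1) * t j a.

Definition d_at (t : Z -> Z -> Z) (i j a : Z) : Z :=
  t a i * t (a+1) j - t a j * t (a+1) i.

From Stdlib Require Import ZArith Lia.
Open Scope Z_scope.

(* The tiling has "rank 2": every row is an integer combination of two
   adjacent rows b and b+1,
       t i x = c_{i,b+1} t b x + c_{b,i} t (b+1) x        for all x,
   with the coefficients c read off at any column a.  This comes from a
   three-term recurrence t r x + t r (x+2) = k_x t r (x+1) whose ratio k_x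
   does not depend on the row r; two sequences obeying it and agreeing at
   two consecutive columns agree everywhere.  Expanding a 2x2 minor in
   this basis factors it as (coefficient determinant) * d_{pq}; taking
   the columns a, a+1 identifies the coefficient determinant with c_{ij}.
   Positivity follows from a general fact: if f, g > 0 have all adjacent
   2x2 determinants equal to 1, then all determinants f p g q - f q g p
   with p < q are positive (the ratio g/f is strictly increasing). *)

Lemma pluecker3 (f g : Z -> Z) (p y z : Z) :
  f y * (f p * g z - f z * g p) =
  f z * (f p * g y - f y * g p) + f p * (f y * g z - f z * g y).
Proof. ring. Qed.

Lemma det_pos_of_adjacent (f g : Z -> Z)
  (hf : forall x, 0 < f x)
  (hadj : forall x, f x * g (x+1) - f (x+1) * g x = 1) :
  forall p q, p < q -> 0 < f p * g q - f q * g p.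
Proof.
  intros p q hpq.
  assert (Hgap : forall n : nat,
    0 < f p * g (p + Z.of_nat (S n)) - f (p + Z.of_nat (S n)) * g p).
  { induction n as [|n IH].
    - specialize (hadj p). replace (p + Z.of_nat 1) with (p+1) by lia. lia.
    - set (y := p + Z.of_nat (S n)) in IH.
      replace (p + Z.of_nat (S (S n))) with (y + 1) by (unfold y; lia).
      pose proof (pluecker3 f g p y (y+1)) as E.
      rewrite hadj in E.
      pose proof (hf y). pose proof (hf p). pose proof (hf (y+1)).
      nia. }
  specialize (Hgap (Z.to_nat (q - p - 1))).
  replace (p + Z.of_nat (S (Z.to_nat (q - p - 1)))) with q in Hgap by lia.
  exact Hgap.
Qed.

Lemma relate_all_of_adjacent (R : Z -> Z -> Prop)
  (hadj : forall r, R r (r+1))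
  (hsym : forall r s, R r s -> R s r)
  (htrans : forall r s w, R r s -> R s w -> R r w) :
  forall r s, R r s.
Proof.
  assert (Hup : forall r (n : nat), R r (r + Z.of_nat n)).
  { intros r n. induction n as [|n IH].
    - rewrite Z.add_0_r. exact (htrans _ _ _ (hadj r) (hsym _ _ (hadj r))).
    - replace (r + Z.of_nat (S n)) with (r + Z.of_nat n + 1) by lia.
      exact (htrans _ _ _ IH (hadj _)). }
  intros r s. destruct (Z_le_gt_dec r s) as [Hrs|Hrs].
  - specialize (Hup r (Z.to_nat (s - r))).
    now replace (r + Z.of_nat (Z.to_nat (s - r))) with s in Hup by lia.
  - apply hsym. specialize (Hup s (Z.to_nat (r - s))).
    now replace (s + Z.of_nat (Z.to_nat (r - s))) with r in Hup by lia.
Qed.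

Lemma two_step_agreement (u v : Z -> Z) (a : Z)
  (hshift : forall x, u x = v x /\ u (x+1) = v (x+1) <->
                      u (x+1) = v (x+1) /\ u (x+2) = v (x+2))
  (h0 : u a = v a) (h1 : u (a+1) = v (a+1)) :
  forall x, u x = v x.
Proof.
  assert (Hn : forall n, u (a+n) = v (a+n) /\ u (a+n+1) = v (a+n+1)).
  { intro n. induction n as [|n IH|n IH] using Z.peano_ind.
    - now rewrite Z.add_0_r.
    - replace (a + Z.succ n) with (a+n+1) by lia.
      replace (a+n+1+1) with (a+n+2) by lia.
      now apply hshift.
    - replace (a + Z.pred n) with (a+n-1) by lia.
      replace (a+n-1+1) with (a+n) by lia.
      specialize (hshift (a+n-1)).
      replace (a+n-1+1) with (a+n) in hshift by lia.
      replace (a+n-1+2) with (a+n+1) in hshift by lia.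
      now apply hshift. }
  intro x. replace x with (a + (x - a)) by lia. apply Hn.
Qed.

Lemma cross_eq_trans (u1 v1 u2 v2 u3 v3 : Z) : v2 <> 0 ->
  u1 * v2 = u2 * v1 -> u2 * v3 = u3 * v2 -> u1 * v3 = u3 * v1.
Proof.
  intros Hv2 H12 H23. apply (Z.mul_reg_r _ _ v2 Hv2).
  transitivity (u2 * v1 * v3); [rewrite <- H12; ring|].
  transitivity (v1 * (u2 * v3)); [ring|]. rewrite H23. ring.
Qed.

Section Tiling.
Variable t : Z -> Z -> Z.
Hypothesis ht : is_SL2_tiling t.

Lemma tiling_pos : forall r x, 0 < t r x.
Proof. intros r x. destruct ht as [h _]. specialize (h r x). lia. Qed.

Lemma tiling_det : forall r x, t r x * t (r+1) (x+1) - t r (x+1) * t (r+1) x = 1.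
Proof. apply ht. Qed.

Definition follows_row (b : Z) (u : Z -> Z) : Prop :=
  forall x, (u x + u (x+2)) * t b (x+1) = (t b x + t b (x+2)) * u (x+1).

(* Adjacent rows obey a common recurrence: its two sides differ by the
   difference of two adjacent determinants, 1 - 1. *)
Lemma adjacent_rows_follow : forall r, follows_row r (t (r+1)).
Proof.
  intros r x. pose proof (tiling_det r x) as D0.
  pose proof (tiling_det r (x+1)) as D1.
  replace (x+1+1) with (x+2) in D1 by lia. lia.
Qed.

Lemma rows_follow : forall b r, follows_row b (t r).
Proof.
  intros b r.
  apply (relate_all_of_adjacent (fun b r => follows_row b (t r))).
  - exact adjacent_rows_follow.
  - intros s w H x. specialize (H x). lia.
  - intros s w v H1 H2 x. pose proof (tiling_pos w (x+1)).
    apply (cross_eq_trans _ _ (t w x + t w (x+2)) (t w (x+1)));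
      [lia|apply H2|apply H1].
Qed.

Lemma combination_follows (b : Z) (u v : Z -> Z) (al be : Z) :
  follows_row b u -> follows_row b v ->
  follows_row b (fun x => al * u x + be * v x).
Proof.
  intros Hu Hv x.
  transitivity (al * ((u x + u (x+2)) * t b (x+1))
              + be * ((v x + v (x+2)) * t b (x+1))); [ring|].
  rewrite Hu, Hv. ring.
Qed.

Lemma follows_unique (b : Z) (u v : Z -> Z) (a : Z) :
  follows_row b u -> follows_row b v ->
  u a = v a -> u (a+1) = v (a+1) -> forall x, u x = v x.
Proof.
  intros Hu Hv. apply two_step_agreement. intro x.
  specialize (Hu x). specialize (Hv x). pose proof (tiling_pos b (x+1)).
  split; intros [E0 E1]; split; auto; rewrite E1 in Hu; nia.
Qed.

Lemma row_decomposition (a b i : Z) : forall x,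
  t i x = c_at t i (b+1) a * t b x + c_at t b i a * t (b+1) x.
Proof.
  pose proof (tiling_det b a) as D.
  apply (follows_unique b _ _ a).
  - apply rows_follow.
  - apply combination_follows; apply rows_follow.
  - cbv beta. unfold c_at.
    transitivity (t i a * (t b a * t (b+1) (a+1) - t b (a+1) * t (b+1) a));
      [rewrite D|]; ring.
  - cbv beta. unfold c_at.
    transitivity (t i (a+1) * (t b a * t (b+1) (a+1) - t b (a+1) * t (b+1) a));
      [rewrite D|]; ring.
Qed.

Lemma minor_factorization (a b i j x y : Z) :
  t i x * t j y - t i y * t j x =
  (c_at t i (b+1) a * c_at t b j a - c_at t b i a * c_at t j (b+1) a)
  * d_at t x y b.
Proof.
  unfold d_at at 1.
  rewrite (row_decomposition a b i x), (row_decomposition a b i y),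
          (row_decomposition a b j x), (row_decomposition a b j y).
  ring.
Qed.

(* Columns a, a+1 and rows b, b+1 are pairs of positive sequences with
   adjacent determinants 1, so c_{ij} and d_{pq} are positive. *)
Lemma c_at_pos (i j a : Z) : i < j -> 0 < c_at t i j a.
Proof.
  intro hij. unfold c_at.
  assert (Hadj : forall r, t r a * t (r+1) (a+1) - t (r+1) a * t r (a+1) = 1)
    by (intro r; pose proof (tiling_det r a); lia).
  pose proof (det_pos_of_adjacent (fun r => t r a) (fun r => t r (a+1))
    (fun r => tiling_pos r a) Hadj i j hij).
  lia.
Qed.

Lemma d_at_pos (p q b : Z) : p < q -> 0 < d_at t p q b.
Proof. apply (det_pos_of_adjacent (t b) (t (b+1)) (tiling_pos b) (tiling_det b)). Qed.

End Tiling.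

Theorem proposition5p7 (t : Z -> Z -> Z) (ht : is_SL2_tiling t)
  (i j p q : Z) (hij : i < j) (hpq : p < q) (a b : Z) :
  t i p * t j q - t i q * t j p = c_at t i j a * d_at t p q b /\
  0 < t i p * t j q - t i q * t j p.
Proof.
  (* c_{ij} is the coefficient determinant: evaluate the factorization at
     columns a, a+1, where d_at t a (a+1) b = 1. *)
  assert (Hc : c_at t i j a =
    c_at t i (b+1) a * c_at t b j a - c_at t b i a * c_at t j (b+1) a).
  { unfold c_at at 1. rewrite (minor_factorization t ht a b i j).
    unfold d_at. rewrite (tiling_det t ht b a). ring. }
  assert (Heq : t i p * t j q - t i q * t j p = c_at t i j a * d_at t p q b).
  { rewrite Hc. apply minor_factorization, ht. }
  split; [exact Heq|]. rewrite Heq.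
  apply Z.mul_pos_pos; [apply c_at_pos | apply d_at_pos]; assumption.
Qed.
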